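(* Let $q$ be a prime power and $n\ge 3$. There does not exist a Cameron-Liebler line class of $\mathrm{AG}(n,q)$ with parameter $x=2$.
   Context: $\mathrm{AG}(n,q)$ is $\mathrm{PG}(n,q)$ with a hyperplane $\pi_\infty$ removed; affine points are points outside $\pi_\infty$, affine lines are projective lines not contained in $\pi_\infty$. With $A_n$ the incidence matrix of affine points versus affine lines, a set $\mathcal{L}$ of affine lines is a Cameron-Liebler line class of $\mathrm{AG}(n,q)$ if its characteristic vector lies in the real row space $\mathrm{Im}(A_n^T)$; its parameter is $|\mathcal{L}|(q-1)/(q^n-1)$. *)

From HB Require Import structures.
From mathcomp Require Import all_boot all_order all_algebra all_field.
From mathcomp Require Import reals.
Set Implicit Arguments. Unset Strict Implicit. Unset Printing Implicit Defensive.
Import Order.TTheory GRing.Theory Num.Theory.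
Local Open Scope ring_scope.

(* AG(n,q) with F a finite field of order q: affine points are the row
   vectors 'rV[F]_n; an affine line is a set {a + t v | t in F} with v != 0. *)
Definition ag_point (F : finFieldType) (n : nat) := 'rV[F]_n.

Definition is_affine_line (F : finFieldType) (n : nat)
  (S : {set 'rV[F]_n}) : bool :=
  [exists a : 'rV[F]_n, exists v : 'rV[F]_n,
     (v != 0) && (S == [set a + t *: v | t : F])].

Definition affine_lines (F : finFieldType) (n : nat) : {set {set 'rV[F]_n}} :=
  [set S | is_affine_line S].

(* Incidence matrix A_n : affine points x affine lines, A(p,l) = [p \in l]. *)
(* chi_L in Im(A_n^T) (real row space): there is w : points -> R with
   chi_L(l) = sum_p A(p,l) w(p) = sum_{p in l} w(p) for every affine line l. *)
Definition cameron_liebler_AG (R : realType) (F : finFieldType) (n : nat)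
  (L : {set {set 'rV[F]_n}}) : Prop :=
  L \subset affine_lines F n /\
  exists w : 'rV[F]_n -> R,
    forall l, l \in affine_lines F n ->
      ((l \in L)%:R : R) = \sum_(p in l) w p.

Definition cl_parameter (R : realType) (F : finFieldType) (n : nat)
  (L : {set {set 'rV[F]_n}}) : R :=
  (#|L|%:R * (#|F|.-1)%:R) / (#|F| ^ n).-1%:R.

(* Let w be point weights whose sum along every affine line is the indicator
   of L.  Double counting pairs (point, direction) shows that the total weight
   W equals the parameter.  Line sums are 0 or 1, so for a plane the number of
   lines of L it contains in one parallel class does not depend on the class,
   and a family of pairwise distinct parallel lines contains at most W lines
   of L.  If W > 1, some class contains two lines a + <d> and a + u + <d> of L;
   as n >= 3 there is e outside <d, u>.  The planes a + <d, e> and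
   a + u + <d, e> contain lines of L of direction e, through a + t0 d and
   a + u + t1 d.  For f = u + (t1 - t0) d, each of the planes a + <d, f> and
   a + t0 d + <e, f> contains two lines of L of direction f, and they meet in
   a single line, so direction f carries three lines of L and W >= 3. *)

From HB Require Import structures.
From mathcomp Require Import all_boot all_order all_algebra all_field.
From mathcomp Require Import reals.
From mathcomp Require Import ring lra.

Set Implicit Arguments. Unset Strict Implicit. Unset Printing Implicit Defensive.
Import Order.TTheory GRing.Theory Num.Theory.
Local Open Scope ring_scope.

Ltac row_ring := apply/matrixP => ? ?; rewrite !mxE; ring.

Lemma scale_left_inj (K : fieldType) (U : lmodType K) (v : U) :
  v != 0 -> injective (fun a : K => a *: v).
Proof.
move=> v0 a b /eqP; rewrite -subr_eq0 -scalerBl scaler_eq0 (negbTE v0) orbF.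
by rewrite subr_eq0 => /eqP.
Qed.

Section AffineLines.
Variables (F : finFieldType) (n : nat).
Local Notation V := 'rV[F]_n.

Definition line (a v : V) : {set V} := [set a + t *: v | t : F].

Lemma line_affine a v : v != 0 -> line a v \in affine_lines F n.
Proof.
by move=> v0; rewrite inE; apply/existsP; exists a; apply/existsP; exists v; rewrite v0 eqxx.
Qed.

Lemma line_param_inj (a v : V) : v != 0 -> injective (fun t : F => a + t *: v).
Proof. by move=> v0 t t' /addrI /(scale_left_inj v0). Qed.

Lemma big_line (R : nmodType) (a v : V) (G : V -> R) : v != 0 ->
  \sum_(x in line a v) G x = \sum_(t : F) G (a + t *: v).
Proof. by move=> v0; rewrite big_imset //; move=> t t' _ _; apply: line_param_inj. Qed.

Lemma line_reparam (a v : V) t r : r != 0 -> line (a + t *: v) (r *: v) = line a v.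
Proof.
move=> r0; apply/setP => x; apply/imsetP/imsetP => -[s _ ->].
- by exists (t + s * r) => //; row_ring.
- by exists ((s - t) / r) => //; rewrite scalerA divfK //; row_ring.
Qed.

Lemma line_eq_reparam (x v a v0 : V) : v != 0 -> line x v = line a v0 ->
  exists t r, [/\ r != 0, x = a + t *: v0 & v = r *: v0].
Proof.
move=> v_neq0 e.
have /imsetP[t _ ex] : x \in line a v0.
  by rewrite -e; apply/imsetP; exists 0; rewrite ?scale0r ?addr0.
have /imsetP[t' _ ex1] : x + v \in line a v0.
  by rewrite -e; apply/imsetP; exists 1; rewrite ?scale1r.
have ev : v = (t' - t) *: v0 by apply: (addrI x); rewrite ex1 [in RHS]ex; row_ring.
exists t, (t' - t); split=> //.
by apply: contraNneq v_neq0 => r0; rewrite ev r0 scale0r.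
Qed.

Lemma card_line_reps (a v0 : V) : v0 != 0 ->
  #|[set xv : V * V | (xv.2 != 0) && (line xv.1 xv.2 == line a v0)]| = (#|F| * #|F|.-1)%N.
Proof.
move=> v00; pose rep (tr : F * F) := (a + tr.1 *: v0, tr.2 *: v0).
have -> : [set xv : V * V | (xv.2 != 0) && (line xv.1 xv.2 == line a v0)] =
    rep @: setX [set: F] [set~ 0].
  apply/setP => -[x v]; rewrite inE /=; apply/andP/imsetP => [[v0' /eqP e]|[[t r]]].
  - have [t [r [r0 -> ->]]] := line_eq_reparam v0' e.
    by exists (t, r); rewrite // !inE.
  - rewrite !inE /= => r0 [-> ->].
    by rewrite scaler_eq0 negb_or r0 v00 line_reparam.
rewrite card_imset ?cardsX ?cardsT ?cardsC1 // => -[t r] [t' r'] [].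
by move=> /(line_param_inj v00) -> /(scale_left_inj v00) ->.
Qed.

End AffineLines.

Section LineSums.
Variables (R : nmodType) (F : finFieldType) (n : nat) (w : 'rV[F]_n -> R).
Local Notation V := 'rV[F]_n.

Definition line_sum (a v : V) : R := \sum_(t : F) w (a + t *: v).

Definition total_weight : R := \sum_x w x.

Lemma line_sum_shift a s v : line_sum (a + s *: v) v = line_sum a v.
Proof.
rewrite /line_sum [RHS](reindex_inj (addrI s)) /=.
by apply: eq_bigr => t _; rewrite scalerDl addrA.
Qed.

Lemma sum_line_sum v : \sum_x line_sum x v = total_weight *+ #|F|.
Proof.
rewrite /line_sum exchange_big /= -sumr_const; apply: eq_bigr => t _.
by rewrite [RHS](reindex_inj (addIr (t *: v))).
Qed.

Lemma plane_sum_swap a u v :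
  \sum_(s : F) line_sum (a + s *: u) v = \sum_(t : F) line_sum (a + t *: v) u.
Proof.
rewrite /line_sum exchange_big; apply: eq_bigr => t _; apply: eq_bigr => s _.
by rewrite addrAC.
Qed.

End LineSums.

Section Frame.
Variables (F : finFieldType) (n : nat).
Local Notation V := 'rV[F]_n.

Lemma exists_outside_span2 (d u : V) : (3 <= n)%N ->
  exists e, forall s t, e != s *: d + t *: u.
Proof.
move=> n3; pose span2 := [set st.1 *: d + st.2 *: u | st : F * F].
have /subsetPn[e _ e_out] : ~~ ([set: V] \subset span2).
  apply: contraTN isT => /subset_leq_card; rewrite cardsT card_mx mul1n.
  move/leq_trans/(_ (leq_imset_card _ _)); rewrite card_prod mulnn leqNgt ltn_exp2l ?n3 //.
  by apply/card_gt1P; exists 0, 1; rewrite eq_sym oner_eq0.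
by exists e => s t; apply: contraNneq e_out => ->; apply/imsetP; exists (s, t).
Qed.

Variables (d u e : V).
Hypotheses (d_neq0 : d != 0) (u_off : forall r, u != r *: d)
  (e_off : forall s t, e != s *: d + t *: u).

Definition frame (x y z : F) : V := x *: d + y *: u + z *: e.

Lemma frame_eq0 x y z : frame x y z = 0 -> [/\ x = 0, y = 0 & z = 0].
Proof.
move=> /eqP; rewrite addr_eq0 => /eqP ez.
have z0 : z = 0.
  apply: contraTeq (e_off (- x / z) (- y / z)) => z_neq0; rewrite negbK; apply/eqP.
  by rewrite -[e](scalerK z_neq0) -[z *: e]opprK -ez; row_ring.
move: ez; rewrite z0 scale0r oppr0 => /eqP; rewrite addr_eq0 => /eqP ey.
have y0 : y = 0.
  apply: contraTeq (u_off (- x / y)) => y_neq0; rewrite negbK; apply/eqP.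
  by rewrite -[u](scalerK y_neq0) -[y *: u]opprK -ey; row_ring.
by move: ey; rewrite y0 scale0r oppr0 => /eqP; rewrite scaler_eq0 (negbTE d_neq0) orbF => /eqP.
Qed.

Lemma frame_inj x y z x' y' z' :
  frame x y z = frame x' y' z' -> [/\ x = x', y = y' & z = z'].
Proof.
move=> /eqP; rewrite -subr_eq0 => /eqP.
have -> : frame x y z - frame x' y' z' = frame (x - x') (y - y') (z - z').
  by rewrite /frame; row_ring.
by case/frame_eq0 => /subr0_eq -> /subr0_eq -> /subr0_eq ->.
Qed.

(* The lines a + <d> and a + t0 d + <e>; the point [inr 0] repeats [inl t0]. *)
Definition cross (a : V) (t0 : F) (k : F + F) : V :=
  match k with inl s => a + s *: d | inr t => a + t0 *: d + t *: e end.

Lemma cross_parallel_inj a t0 c :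
  {in [pred k : F + F | if k is inr t then t != 0 else true] &,
    forall k k' r, cross a t0 k = cross a t0 k' + r *: (u + c *: d) -> k = k'}.
Proof.
pose x_of (k : F + F) := if k is inl s then s else t0.
pose z_of (k : F + F) := if k is inr t then t else 0.
have crossE k : cross a t0 k = a + frame (x_of k) 0 (z_of k).
  by case: k => ? /=; rewrite /frame; row_ring.
move=> k k' Pk Pk' r; rewrite !crossE => ekk'.
have : frame (x_of k) 0 (z_of k) = frame (x_of k' + r * c) r (z_of k').
  apply: (addrI a); rewrite ekk' /frame.
  (* [ring] rejects the [match]es hidden in [x_of] and [z_of] as atoms. *)
  by move: (x_of k) (x_of k') (z_of k) (z_of k') => x x' z z'; row_ring.
case/frame_inj => + /esym r0 ez; rewrite r0 mul0r addr0.
case: k k' Pk Pk' ez {ekk'} => [s|t] [s'|t']; rewrite !inE /=.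
- by move=> _ _ _ ->.
- by move=> _ /eqP t'_neq0 /esym/t'_neq0.
- by move=> /eqP t_neq0 _ /t_neq0.
- by move=> _ _ ->.
Qed.

End Frame.

Section ZeroOneLineSums.
Variables (R : realFieldType) (F : finFieldType) (n : nat) (w : 'rV[F]_n -> R).
Local Notation V := 'rV[F]_n.
Local Notation ls := (line_sum w).
Local Notation W := (total_weight w).
Hypothesis line_sum01 : forall a v, v != 0 -> ls a v = 0 \/ ls a v = 1.

Lemma line_sum_ge0 a v : v != 0 -> 0 <= ls a v.
Proof. by move=> v0; case: (line_sum01 a v0) => ->. Qed.

Lemma line_sum_le1 a v : v != 0 -> ls a v <= 1.
Proof. by move=> v0; case: (line_sum01 a v0) => ->. Qed.

Lemma exists_line_sum1 (I : finType) (P : pred I) (b : I -> V) v : v != 0 ->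
  0 < \sum_(i | P i) ls (b i) v -> exists2 i, P i & ls (b i) v = 1.
Proof.
move=> v0; case: (pickP [pred i | P i && (ls (b i) v == 1)]) => [i /andP[Pi /eqP]|none].
  by exists i.
rewrite big1 ?ltxx // => i Pi; case: (line_sum01 (b i) v0) => // ls1.
by move: (none i); rewrite /= Pi ls1 eqxx.
Qed.

Lemma line_sum_le_plane c g v : v != 0 -> ls c v <= \sum_(t : F) ls (c + t *: g) v.
Proof.
move=> v0; rewrite (bigD1 0) //= scale0r addr0 lerDl.
by apply: sumr_ge0 => t _; apply: line_sum_ge0.
Qed.

Lemma line_sums_le_plane c g v : v != 0 ->
  ls c v + ls (c + g) v <= \sum_(t : F) ls (c + t *: g) v.
Proof.
move=> v0; rewrite (bigD1 (0 : F)) // (bigD1 (1 : F)) ?oner_eq0 //=.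
by rewrite scale0r addr0 scale1r addrA lerDl; apply: sumr_ge0 => t _; apply: line_sum_ge0.
Qed.

Lemma parallel_line_sums_le (I : finType) (P : pred I) (b : I -> V) v : v != 0 ->
  {in P &, forall k k' r, b k = b k' + r *: v -> k = k'} ->
  \sum_(k | P k) ls (b k) v <= W.
Proof.
move=> v0 b_inj; pose h (p : I * F) := b p.1 + p.2 *: v.
pose A := [set p : I * F | P p.1].
have h_inj : {in A &, injective h}.
  move=> [k s] [k' s']; rewrite !inE /= => Pk Pk'; rewrite /h /= => e.
  have kk' : k = k' by apply: b_inj (s' - s) _ => //; rewrite scalerBl addrA -e addrK.
  by move: e; rewrite kk' => /addrI /(scale_left_inj v0) ->.
have q_gt0 : (0 < #|F|)%N by apply/card_gt0P; exists 0.
rewrite -(ler_pMn2r q_gt0) -(sum_line_sum w v) -sumrMnl.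
rewrite (eq_bigr (fun k => \sum_(s : F) ls (b k + s *: v) v)); last first.
  by move=> k _; rewrite -sumr_const; apply: eq_bigr => s _; rewrite line_sum_shift.
rewrite pair_big_dep (eq_bigl [in A]) => [|p]; last by rewrite inE andbT.
rewrite -(big_imset (fun x => ls x v) h_inj) [leRHS](bigID [in h @: A]) /= lerDl.
by apply: sumr_ge0 => x _; apply: line_sum_ge0.
Qed.

Lemma two_parallel_lines d : d != 0 -> 1 < W ->
  exists a b, [/\ ls a d = 1, ls b d = 1 & b \notin line a d].
Proof.
move=> d0 W_gt1; have q_gt0 : (0 < #|F|)%N by apply/card_gt0P; exists 0.
have [a _ ha] : exists2 a : V, true & ls a d = 1.
  apply: (exists_line_sum1 d0); rewrite sum_line_sum pmulrn_lgt0 //.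
  exact: lt_trans W_gt1.
have [b b_off hb] : exists2 b, b \notin line a d & ls b d = 1.
  apply: (exists_line_sum1 d0).
  have := sum_line_sum w d; rewrite (bigID [in line a d]) /= big_line //.
  rewrite (eq_bigr (fun _ => 1)) => [|t _]; last by rewrite line_sum_shift.
  have : 1 *+ #|F| < W *+ #|F| by rewrite ltr_pMn2r.
  rewrite sumr_const; lra.
exists a, b; split=> //.
Qed.

Lemma total_weight_ge3 a d u e : d != 0 -> (forall r, u != r *: d) ->
  (forall s t, e != s *: d + t *: u) -> ls a d = 1 -> ls (a + u) d = 1 -> 3 <= W.
Proof.
move=> d0 u_off e_off ha hu.
have e0 : e != 0 by apply: contra_neq (e_off 0 0) => ->; rewrite !scale0r addr0.
have [t0 _ h0] : exists2 t0 : F, true & ls (a + t0 *: d) e = 1.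
  apply: (exists_line_sum1 e0); rewrite plane_sum_swap.
  by apply: lt_le_trans (line_sum_le_plane _ _ d0); rewrite ha ltr01.
have [t1 _ h1] : exists2 t1 : F, true & ls (a + u + t1 *: d) e = 1.
  apply: (exists_line_sum1 e0); rewrite plane_sum_swap.
  by apply: lt_le_trans (line_sum_le_plane _ _ d0); rewrite hu ltr01.
pose f := u + (t1 - t0) *: d.
have f0 : f != 0.
  apply: contra_neq (u_off (t0 - t1)) => f_eq0.
  by rewrite -[u](addrK ((t1 - t0) *: d)) -/f f_eq0; row_ring.
have plane_df : 2 <= \sum_(s : F) ls (a + s *: d) f.
  rewrite plane_sum_swap; apply: le_trans (line_sums_le_plane _ _ d0).
  by rewrite addrA line_sum_shift ha hu; lra.
have plane_ef : 2 <= \sum_(t : F) ls (a + t0 *: d + t *: e) f.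
  rewrite plane_sum_swap; apply: le_trans (line_sums_le_plane _ _ e0).
  rewrite (_ : a + t0 *: d + f = a + u + t1 *: d) ?h0 ?h1; first lra.
  by rewrite /f; row_ring.
have := parallel_line_sums_le f0
  (cross_parallel_inj d0 u_off e_off (a := a) (t0 := t0) (c := t1 - t0)).
rewrite big_sumType /=.
move: plane_ef; rewrite (bigD1 (0 : F)) //= scale0r addr0.
have := line_sum_le1 (a + t0 *: d) f0; lra.
Qed.

Lemma total_weight_gap : (3 <= n)%N -> 1 < W -> 3 <= W.
Proof.
move=> n3 W_gt1; pose d : V := const_mx 1.
have d0 : d != 0.
  apply/eqP => /matrixP/(_ 0 (Ordinal (ltn_trans (isT : 0 < 2)%N n3)))/eqP.
  by rewrite !mxE oner_eq0.
have [a [b [ha hb b_off]]] := two_parallel_lines d0 W_gt1.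
have [e e_off] := exists_outside_span2 d (b - a) n3.
apply: (total_weight_ge3 d0 _ e_off ha); last by rewrite addrC subrK.
move=> r; apply: contraNneq b_off => ba_r.
by apply/imsetP; exists r; rewrite // -ba_r addrC subrK.
Qed.

End ZeroOneLineSums.

Section CameronLiebler.
Variables (R : realType) (F : finFieldType) (n : nat).
Local Notation V := 'rV[F]_n.
Variables (L : {set {set V}}) (w : V -> R).
Hypothesis L_lines : L \subset affine_lines F n.
Hypothesis w_L : forall l, l \in affine_lines F n -> ((l \in L)%:R : R) = \sum_(p in l) w p.

Lemma line_sum_indicator (a v : V) : v != 0 -> line_sum w a v = (line a v \in L)%:R.
Proof. by move=> v0; rewrite w_L ?line_affine // big_line. Qed.

Lemma cl_line_sum01 (a v : V) : v != 0 -> line_sum w a v = 0 \/ line_sum w a v = 1.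
Proof. by move=> v0; rewrite line_sum_indicator //; case: (_ \in _); [right | left]. Qed.

Lemma sum_line_sums_card :
  \sum_(v : V | v != 0) \sum_x line_sum w x v = (#|F| * #|F|.-1)%:R *+ #|L|.
Proof.
rewrite exchange_big pair_big /=.
rewrite (eq_bigr (fun p => if line p.1 p.2 \in L then 1 else 0)) => [|p /= v0]; last first.
  by rewrite line_sum_indicator //; case: (_ \in _).
rewrite -big_mkcondr /= (partition_big (fun p => line p.1 p.2) [in L]) => [|p /andP[]//].
rewrite -sumr_const; apply: eq_bigr => l lL.
have := subsetP L_lines l lL; rewrite inE => /existsP[a /existsP[v0 /andP[v00 /eqP el]]].
rewrite -/(line a v0) in el; rewrite sumr_const -(card_line_reps a v00) -el.
congr _%:R.
apply: eq_card => p; rewrite unfold_in inE /=.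
case: (line p.1 p.2 =P l) => [->|]; rewrite ?andbT ?andbF //.
by apply: andb_idr.
Qed.

Lemma total_weight_cl_parameter : (0 < n)%N -> total_weight w = cl_parameter R L.
Proof.
move=> n0; have q_gt1 : (1 < #|F|)%N by apply/card_gt1P; exists 0, 1; rewrite eq_sym oner_eq0.
have q0 : #|F|%:R != 0 :> R by rewrite pnatr_eq0 -lt0n ltnW.
have qn0 : (#|F| ^ n).-1%:R != 0 :> R.
  by rewrite pnatr_eq0 -lt0n -subn1 subn_gt0 -{1}(expn0 #|F|) ltn_exp2l.
have := sum_line_sums_card.
rewrite (eq_bigr (fun=> total_weight w *+ #|F|)) => [|v _]; last exact: sum_line_sum.
rewrite sumr_const cardC1 card_mx mul1n => count.
apply: (mulIf qn0); rewrite divfK //; apply: (mulIf q0).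
rewrite mulrAC !mulr_natr count -!mulrnA; congr (_ *+ _).
by rewrite mulnC; congr (_ * _); apply: mulnC.
Qed.

End CameronLiebler.

Theorem theorem6p8 (R : realType) (F : finFieldType) (n : nat) :
  (3 <= n)%N ->
  ~ exists L : {set {set 'rV[F]_n}},
      cameron_liebler_AG R L /\ cl_parameter R L = 2.
Proof.
move=> n3 [L [[L_lines [w w_L]] param2]].
have W2 : total_weight w = 2.
  by rewrite (total_weight_cl_parameter L_lines w_L) ?param2 // (ltn_trans _ n3).
have := total_weight_gap (cl_line_sum01 w_L) n3; rewrite W2; lra.
Qed.
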